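(* If $\dim({\cal H})<\infty$, then $\mathrm{Sig}(T)=0$ for every $J$-unitary $T$ on ${\cal K}$ (all of which are then essentially ${\mathbb S}^1$-gapped and ${\mathbb S}^1$-Fredholm).
   Context: ${\cal H}$ is a complex Hilbert space, ${\cal K}={\cal H}\oplus{\cal H}$, $J=\begin{pmatrix}{\bf 1}&0\\0&-{\bf 1}\end{pmatrix}$. A bounded invertible $T$ is $J$-unitary if $T^*JT=J$; it is essentially ${\mathbb S}^1$-gapped if it has only discrete spectrum (isolated eigenvalues of finite algebraic multiplicity) on the unit circle, and ${\mathbb S}^1$-Fredholm if $T-z{\bf 1}$ is Fredholm for all $|z|=1$. For essentially ${\mathbb S}^1$-gapped $T$, choose $h>0$ such that the closed annulus $\{e^{-h}\le|z|\le e^h\}$ contains only discrete spectrum of $T$ and none on its boundary; let ${\cal E}_=$ be the span of the generalized eigenspaces of the eigenvalues of $T$ in this annulus, $\Phi_=$ an isometry onto ${\cal E}_=$, and $\mathrm{Sig}(T)=\nu_+-\nu_-$ where $\nu_\pm$ are the numbers of positive/negative eigenvalues of $\Phi_=^*J\Phi_=$. *)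

From HB Require Import structures.
From mathcomp Require Import all_boot all_order all_algebra.
From mathcomp Require Export complex.
From mathcomp Require Export reals.
From mathcomp Require Export sequences exp.
Set Implicit Arguments.
Unset Strict Implicit.
Unset Printing Implicit Defensive.
Import Order.TTheory GRing.Theory Num.Theory.
Local Open Scope ring_scope.

(* Finite-dimensional setting: H = C^n, K = H (+) H = C^(n+n),
   matrices act on column vectors 'cV_(n+n). *)

Definition adjmx (R : realType) m p (A : 'M[R[i]]_(m, p)) : 'M[R[i]]_(p, m) :=
  map_mx Num.conj A^T.

Definition Jmx (R : realType) (n : nat) : 'M[R[i]]_(n + n) :=
  block_mx 1%:M 0 0 (- 1%:M).

Definition J_unitary (R : realType) (n : nat) (T : 'M[R[i]]_(n + n)) : Prop :=
  T \in unitmx /\ adjmx T *m Jmx R n *m T = Jmx R n.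

Definition in_spectrum (R : realType) m (T : 'M[R[i]]_m) (z : R[i]) : Prop :=
  ~ (T - z%:M \in unitmx).

Definition gen_eigvec (R : realType) m (T : 'M[R[i]]_m) (z : R[i])
  (v : 'cV[R[i]]_m) : Prop :=
  exists k : nat, (T - z%:M) ^+ k *m v = 0.

Definition alg_mult (R : realType) m (T : 'M[R[i]]_m) (z : R[i]) : nat :=
  mup z (char_poly T).

Definition ess_S1_gapped (R : realType) m (T : 'M[R[i]]_m) : Prop :=
  forall z : R[i], `|z| = 1 -> in_spectrum T z ->
    (exists eps : R, 0 < eps /\
       forall w : R[i], 0 < `|w - z| < eps%:C%C -> ~ in_spectrum T w)
    /\ (0 < alg_mult T z)%N.

Definition in_annulus (R : realType) (h : R) (z : R[i]) : Prop :=
  (expR (- h))%:C%C <= `|z| /\ `|z| <= (expR h)%:C%C.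

Definition admissible_h (R : realType) m (T : 'M[R[i]]_m) (h : R) : Prop :=
  0 < h /\
  (forall z : R[i], in_annulus h z -> in_spectrum T z ->
     (exists eps : R, 0 < eps /\
        forall w : R[i], 0 < `|w - z| < eps%:C%C -> ~ in_spectrum T w)
     /\ (0 < alg_mult T z)%N) /\
  (forall z : R[i], in_spectrum T z ->
     `|z| <> (expR h)%:C%C /\ `|z| <> (expR (- h))%:C%C).

Definition E_eq (R : realType) m (T : 'M[R[i]]_m) (h : R)
  (v : 'cV[R[i]]_m) : Prop :=
  exists (s : seq (R[i] * 'cV[R[i]]_m)),
    (forall p, p \in s -> in_annulus h p.1 /\ in_spectrum T p.1
                          /\ gen_eigvec T p.1 p.2)
    /\ v = \sum_(p <- s) p.2.

Definition isometry_onto_E (R : realType) m d (T : 'M[R[i]]_m) (h : R)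
  (Phi : 'M[R[i]]_(m, d)) : Prop :=
  adjmx Phi *m Phi = 1%:M /\
  (forall v : 'cV[R[i]]_m, E_eq T h v <-> exists w : 'cV[R[i]]_d, v = Phi *m w).

(* nu_+ - nu_- for a (Hermitian) matrix M, given the list rs of its
   eigenvalues counted with algebraic multiplicity (char_poly M splits as
   prod (X - r)). *)
Definition eig_list (R : realType) d (M : 'M[R[i]]_d) (rs : seq R[i]) : Prop :=
  char_poly M = \prod_(r <- rs) ('X - r%:P).

Definition signature_of (R : realType) (rs : seq R[i]) : int :=
  (count (fun r : R[i] => 0 < r) rs)%:Z - (count (fun r : R[i] => r < 0) rs)%:Z.

From HB Require Import structures.
From mathcomp Require Import all_boot all_order all_algebra.
From mathcomp Require Import complex reals sequences exp.
From mathcomp Require Import lra zify.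
Import Order.TTheory GRing.Theory Num.Theory.
Local Open Scope ring_scope.
Set Implicit Arguments.
Unset Strict Implicit.
Unset Printing Implicit Defensive.

(* In finite dimension the spectrum is finite, so every matrix is essentially
   S^1-gapped.  For the signature: generalized eigenvectors of a J-unitary T for
   eigenvalues la, mu are J-orthogonal unless mu^* la = 1.  Hence the spectral
   subspaces E_> and E_< of the outside and the inside of the annulus are
   J-neutral and J-orthogonal to E_=, and C^(n+n) = E_= + E_> + E_<, so the
   J-form is nondegenerate on E_=.  If it has p positive and q negative
   directions there, a J-definite subspace together with a J-neutral one
   orthogonal to it must avoid an n-dimensional subspace of the opposite sign:
   p + dim E_>, p + dim E_<, q + dim E_> and q + dim E_< are at most n, while
   p + q + dim E_> + dim E_< >= 2n.  Hence p = q. *)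

Section Adjoint.
Variable R : realType.
Local Notation C := R[i].

Lemma adjmxE m p (A : 'M[C]_(m, p)) i j : adjmx A i j = (A j i)^*.
Proof. by rewrite !mxE. Qed.

Lemma adjmxM m p q (A : 'M[C]_(m, p)) (B : 'M[C]_(p, q)) :
  adjmx (A *m B) = adjmx B *m adjmx A.
Proof. by rewrite /adjmx trmx_mul map_mxM. Qed.

Lemma adjmxD m p (A B : 'M[C]_(m, p)) : adjmx (A + B) = adjmx A + adjmx B.
Proof. by rewrite /adjmx linearD /= map_mxD. Qed.

Lemma adjmx0 m p : adjmx (0 : 'M[C]_(m, p)) = 0.
Proof. by rewrite /adjmx trmx0 map_mx0. Qed.

Lemma adjmxN m p (A : 'M[C]_(m, p)) : adjmx (- A) = - adjmx A.
Proof. by rewrite /adjmx linearN /= map_mxN. Qed.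

Lemma adjmxZ m p (a : C) (A : 'M[C]_(m, p)) :
  adjmx (a *: A) = a^* *: adjmx A.
Proof. by apply/matrixP=> i j; rewrite !mxE rmorphM. Qed.

Lemma adjmxK m p (A : 'M[C]_(m, p)) : adjmx (adjmx A) = A.
Proof. by apply/matrixP=> i j; rewrite !mxE conjCK. Qed.

Lemma adjmx_sum m p (I : Type) (s : seq I) (P : pred I) (F : I -> 'M[C]_(m, p)) :
  adjmx (\sum_(i <- s | P i) F i) = \sum_(i <- s | P i) adjmx (F i).
Proof. by elim/big_rec2: _ => [|i x y _ <-]; rewrite ?adjmx0 ?adjmxD. Qed.

Lemma adjmx_col_mx m1 m2 p (A : 'M[C]_(m1, p)) (B : 'M[C]_(m2, p)) :
  adjmx (col_mx A B) = row_mx (adjmx A) (adjmx B).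
Proof. by rewrite /adjmx tr_col_mx map_row_mx. Qed.

Lemma adjmx_Jmx n : adjmx (Jmx R n) = Jmx R n.
Proof.
rewrite /Jmx /adjmx tr_block_mx map_block_mx !trmx0 !map_mx0 trmx1 linearN /=.
by rewrite map_mxN trmx1 map_mx1.
Qed.

Lemma Jmx_unitary n : adjmx (Jmx R n) *m Jmx R n = 1%:M.
Proof.
rewrite adjmx_Jmx /Jmx mulmx_block !mulmx0 !mul0mx !addr0 !add0r mulmx1.
by rewrite mulmxN mulmx1 opprK -scalar_mx_block.
Qed.

Lemma adjmx_mul_self m (x : 'cV[C]_m) :
  (adjmx x *m x) 0 0 = \sum_i `|x i 0| ^+ 2.
Proof. by rewrite mxE; apply: eq_bigr => i _; rewrite !mxE mulrC normCK. Qed.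

Lemma adjmx_mul_self_ge0 m (x : 'cV[C]_m) : 0 <= (adjmx x *m x) 0 0.
Proof. by rewrite adjmx_mul_self sumr_ge0 // => i _; rewrite exprn_ge0. Qed.

Lemma adjmx_mul_self_eq0 m (x : 'cV[C]_m) : (adjmx x *m x) 0 0 = 0 -> x = 0.
Proof.
rewrite adjmx_mul_self => /eqP; rewrite psumr_eq0 => [/allP x0|i _]; last first.
  exact: exprn_ge0.
apply/matrixP=> i j; rewrite ord1 mxE.
by have /implyP/(_ isT) := x0 i (mem_index_enum _); rewrite sqrf_eq0 normr_eq0 => /eqP.
Qed.

End Adjoint.

Section GeneralizedEigenvectors.
Variables (R : realType) (m : nat) (T : 'M[R[i]]_m).
Local Notation C := R[i].

Lemma gen_eigvec0 z : gen_eigvec T z 0.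
Proof. by exists 0%N; rewrite mulmx0. Qed.

Lemma gen_eigvec_pow z k (x : 'cV[C]_m) : (T - z%:M) ^+ k *m x = 0 ->
  forall l, (k <= l)%N -> (T - z%:M) ^+ l *m x = 0.
Proof. by move=> Hx l /subnK <-; rewrite exprD -mulmxE -mulmxA Hx mulmx0. Qed.

Lemma gen_eigvecD z x y :
  gen_eigvec T z x -> gen_eigvec T z y -> gen_eigvec T z (x + y).
Proof.
move=> [k /gen_eigvec_pow Hx] [l /gen_eigvec_pow Hy]; exists (maxn k l).
by rewrite mulmxDr Hx ?Hy ?leq_maxl ?leq_maxr ?addr0.
Qed.

Lemma gen_eigvecZ z a x : gen_eigvec T z x -> gen_eigvec T z (a *: x).
Proof. by move=> [k Hk]; exists k; rewrite -scalemxAr Hk scaler0. Qed.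

(* Induction on both nilpotency indices: writing [T x = la x + x1] and
   [T y = mu y + y1], invariance gives [<y, x> = mu^* la <y, x>] plus terms
   that vanish by induction. *)
Lemma gen_eigvec_orth (G : 'M[C]_m) (la mu : C) x y :
  adjmx T *m G *m T = G -> mu^* * la != 1 ->
  gen_eigvec T la x -> gen_eigvec T mu y -> adjmx y *m G *m x = 0.
Proof.
move=> HT Hne [k Hx] [l Hy]; elim: k x Hx l y Hy => [|k IHk] x Hx.
  by rewrite expr0 mul1mx in Hx; rewrite Hx => *; rewrite mulmx0.
elim=> [|l IHl] y Hy; first by rewrite expr0 mul1mx in Hy; rewrite Hy adjmx0 !mul0mx.
have Hx1 : (T - la%:M) ^+ k *m ((T - la%:M) *m x) = 0.
  by rewrite mulmxA mulmxE -exprSr.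
have Hy1 : (T - mu%:M) ^+ l *m ((T - mu%:M) *m y) = 0.
  by rewrite mulmxA mulmxE -exprSr.
have Tx : T *m x = la *: x + (T - la%:M) *m x.
  by rewrite mulmxBl mul_scalar_mx addrC subrK.
have Ty : T *m y = mu *: y + (T - mu%:M) *m y.
  by rewrite mulmxBl mul_scalar_mx addrC subrK.
have TyGTx : adjmx y *m G *m x = adjmx (T *m y) *m G *m (T *m x).
  by rewrite -{1}HT adjmxM !mulmxA.
have Exy : adjmx y *m G *m x = (mu^* * la) *: (adjmx y *m G *m x).
  rewrite {1}TyGTx Tx Ty; move: Hx1 Hy1.
  set x1 := (T - la%:M) *m x; set y1 := (T - mu%:M) *m y => Hx1 Hy1.
  rewrite adjmxD adjmxZ !mulmxDl !mulmxDr -!scalemxAl -!scalemxAr.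
  rewrite (IHk _ Hx1 _ _ Hy) (IHk _ Hx1 _ _ Hy1) (IHl _ Hy1).
  by rewrite !scaler0 !addr0 scalerA.
apply/eqP; move: Exy => /eqP; rewrite -subr_eq0 -{1}[_ *m x]scale1r -scalerBl.
by rewrite scaler_eq0 subr_eq0 eq_sym (negbTE Hne).
Qed.

Definition gen_eigpairs (P : pred C) (s : seq (C * 'cV[C]_m)) :=
  forall p, p \in s -> [/\ P p.1, in_spectrum T p.1 & gen_eigvec T p.1 p.2].

Definition gen_eigspan (P : pred C) (x : 'cV[C]_m) :=
  exists2 s, gen_eigpairs P s & x = \sum_(p <- s) p.2.

Lemma gen_eigspan0 P : gen_eigspan P 0.
Proof. by exists [::] => [p|]; rewrite ?big_nil. Qed.

Lemma gen_eigspanD P x y :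
  gen_eigspan P x -> gen_eigspan P y -> gen_eigspan P (x + y).
Proof.
move=> [s1 H1 ->] [s2 H2 ->]; exists (s1 ++ s2); last by rewrite big_cat.
by move=> p; rewrite mem_cat => /orP[/H1|/H2].
Qed.

Lemma gen_eigspanZ P a x : gen_eigspan P x -> gen_eigspan P (a *: x).
Proof.
move=> [s H ->]; exists [seq (p.1, a *: p.2) | p <- s].
  by move=> _ /mapP [q /H [Pq Sq Eq] ->]; split=> //; apply: gen_eigvecZ.
by rewrite big_map scaler_sumr.
Qed.

Lemma gen_eigspan_sum P (I : finType) (F : I -> 'cV[C]_m) :
  (forall i, gen_eigspan P (F i)) -> gen_eigspan P (\sum_i F i).
Proof.
move=> HF; apply: (big_ind (gen_eigspan P)) => //.
  exact: gen_eigspan0.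
exact: gen_eigspanD.
Qed.

Lemma gen_eigspanS P Q x : {subset P <= Q} -> gen_eigspan P x -> gen_eigspan Q x.
Proof.
by move=> PQ [s H ->]; exists s => // p /H [/PQ].
Qed.

Lemma gen_eigspan_filter P Q s : gen_eigpairs P s ->
  gen_eigspan [predI P & Q] (\sum_(p <- s | Q p.1) p.2).
Proof.
move=> H; exists [seq p <- s | Q p.1]; last by rewrite big_filter.
move=> p; rewrite mem_filter => /andP [Qp /H [Pp Sp Ep]].
by split=> //; apply/andP.
Qed.

Lemma gen_eigspan_orth (G : 'M[C]_m) (P Q : pred C) x y :
  adjmx T *m G *m T = G -> (forall a b, P a -> Q b -> b^* * a != 1) ->
  gen_eigspan P x -> gen_eigspan Q y -> adjmx y *m G *m x = 0.
Proof.
move=> HT PQ [s Hs ->] [t Ht ->].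
rewrite adjmx_sum mulmx_suml mulmx_suml big_seq big1 // => q qt.
rewrite mulmx_sumr big_seq big1 // => p ps.
have [Pp _ Ep] := Hs p ps; have [Qq _ Eq] := Ht q qt.
exact: gen_eigvec_orth HT (PQ _ _ Pp Qq) Ep Eq.
Qed.

End GeneralizedEigenvectors.

Lemma in_spectrumE (R : realType) m (T : 'M[R[i]]_m) z :
  in_spectrum T z <-> root (char_poly T) z.
Proof.
rewrite -eigenvalue_root_char /in_spectrum /eigenvalue /eigenspace kermx_eq0.
by rewrite row_free_unit; split=> /negP.
Qed.

Lemma char_poly_roots (R : realType) m (T : 'M[R[i]]_m) :
  exists rs, char_poly T = \prod_(r <- rs) ('X - r%:P).
Proof.
have [rs Hrs] := closed_field_poly_normal (char_poly T).
by exists rs; rewrite Hrs (monicP (char_poly_monic T)) scale1r.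
Qed.

Lemma gen_eigspan1 (R : realType) m (T : 'M[R[i]]_m) (P : pred R[i]) z v :
  P z -> in_spectrum T z -> gen_eigvec T z v -> gen_eigspan T P v.
Proof.
by move=> Pz Sz Ev; exists [:: (z, v)] => [p|]; rewrite ?big_seq1 ?inE => // /eqP ->.
Qed.

Section Spanning.
Variables (R : realType) (m' : nat) (T : 'M[R[i]]_m'.+1).
Local Notation C := R[i].

Lemma horner_mx_XsubC a : horner_mx T ('X - a%:P) = T - a%:M.
Proof. by rewrite rmorphB /= horner_mx_X horner_mx_C. Qed.

Lemma horner_mx_mulmxC p q :
  horner_mx T p *m horner_mx T q = horner_mx T q *m horner_mx T p.
Proof. by rewrite !mulmxE; apply: comm_horner_mx2. Qed.

(* Bezout for the coprime polynomials [('X - z)^k] and ['X - r]. *)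
Lemma gen_eigvec_shift (r z : C) v : gen_eigvec T z v ->
  exists2 w, gen_eigvec T z w & gen_eigvec T r (v - (T - r%:M) *m w).
Proof.
move=> [k Hv]; have [<-|Hzr] := eqVneq z r.
  by exists 0; [apply: gen_eigvec0 | rewrite mulmx0 subr0; exists k].
have : coprimep (('X - z%:P) ^+ k) ('X - r%:P).
  by rewrite coprimep_XsubC rootE horner_exp hornerXsubC expf_neq0 // subr_eq0 eq_sym.
move=> /Bezout_eq1_coprimepP [[u1 u2] /= /(congr1 (horner_mx T))].
rewrite rmorphD !rmorphM rmorph1 rmorphXn /= !horner_mx_XsubC => Hu.
exists (horner_mx T u2 *m v).
  by exists k; rewrite mulmxA -horner_mx_XsubC -rmorphXn horner_mx_mulmxC
    -mulmxA rmorphXn /= horner_mx_XsubC Hv mulmx0.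
exists 0%N; rewrite expr0 mul1mx mulmxA -horner_mx_XsubC horner_mx_mulmxC.
rewrite horner_mx_XsubC -{1}[v]mul1mx -mulmxBl idmxE -Hu addrK -!mulmxE.
by rewrite -mulmxA Hv mulmx0.
Qed.

Lemma gen_eigpairs_shift (r : C) s : gen_eigpairs T predT s ->
  exists2 t, gen_eigpairs T predT t &
    gen_eigvec T r (\sum_(p <- s) p.2 - (T - r%:M) *m \sum_(p <- t) p.2).
Proof.
elim: s => [_|p s IH Hps].
  by exists [::] => [q|]; rewrite ?big_nil ?mulmx0 ?subr0 //; apply: gen_eigvec0.
have [|t Ht Et] := IH; first by move=> q qs; apply: Hps; rewrite inE qs orbT.
have [_ Sp Ep] := Hps p (mem_head _ _).
have [w Ew Erw] := gen_eigvec_shift r Ep.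
exists ((p.1, w) :: t) => [q|].
  by rewrite inE => /orP [/eqP -> //|/Ht].
rewrite !big_cons mulmxDr opprD addrACA.
exact: gen_eigvecD.
Qed.

Lemma gen_eigspan_ker_prod (rs : seq C) x :
  (forall r, r \in rs -> in_spectrum T r) ->
  horner_mx T (\prod_(r <- rs) ('X - r%:P)) *m x = 0 -> gen_eigspan T predT x.
Proof.
elim: rs x => [|r rs IH] x Srs.
  by rewrite big_nil rmorph1 mul1mx => ->; apply: gen_eigspan0.
rewrite big_cons rmorphM /= -mulmxE horner_mx_mulmxC -mulmxA horner_mx_XsubC.
move=> /IH [q qrs|s Hs Es]; first by apply: Srs; rewrite inE qrs orbT.
have [t Ht [k Hk]] := gen_eigpairs_shift r Hs.
rewrite -Es -mulmxBr mulmxA mulmxE -exprSr in Hk.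
rewrite -(subrK (\sum_(p <- t) p.2) x); apply: gen_eigspanD; last by exists t.
by apply: (@gen_eigspan1 _ _ _ _ r) => //; [apply: Srs; exact: mem_head | exists k.+1].
Qed.

End Spanning.

Lemma gen_eigspanT (R : realType) m (T : 'M[R[i]]_m) x : gen_eigspan T predT x.
Proof.
case: m T x => [|m'] T x.
  by rewrite (_ : x = 0) ?thinmx0; [apply: gen_eigspan0 | apply/matrixP=> [[]]].
have [rs Hrs] := char_poly_roots T.
apply: (@gen_eigspan_ker_prod _ _ T rs).
  by move=> r rrs; apply/in_spectrumE; rewrite Hrs root_prod_XsubC.
by rewrite -Hrs Cayley_Hamilton mul0mx.
Qed.

Section Isolation.
Variable R : realType.
Local Notation C := R[i].

Lemma norm_normc (z : C) : `|z| = (Normc.normc z)%:C%C.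
Proof. by case: z. Qed.

Lemma seq_isolated (rs : seq C) z : exists2 eps : R, 0 < eps &
  forall w, w \in rs -> w != z -> eps%:C%C <= `|w - z|.
Proof.
elim: rs => [|r rs [eps eps_gt0 Heps]]; first by exists 1.
have [->|rz] := eqVneq r z.
  by exists eps => // w; rewrite inE => /orP [/eqP -> /eqP|/Heps].
exists (Num.min eps (Normc.normc (r - z))).
  by rewrite lt_min eps_gt0 -(@ltcR R) -norm_normc normr_gt0 subr_eq0.
move=> w; rewrite inE => /orP [/eqP -> _|wrs wz].
  by rewrite norm_normc lecR ge_min lexx orbT.
by apply: le_trans (Heps w wrs wz); rewrite lecR ge_min lexx.
Qed.

Lemma matrix_ess_S1_gapped m (T : 'M[C]_m) : ess_S1_gapped T.
Proof.
move=> z _ /in_spectrumE Tz; split; last first.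
  rewrite /alg_mult (mup_geq _ 1 (monic_neq0 (char_poly_monic T))) expr1.
  by rewrite dvdp_XsubCl.
have [rs Hrs] := char_poly_roots T; have [eps eps_gt0 Heps] := seq_isolated rs z.
exists eps; split=> // w /andP [wz_gt0 wz_lt] /in_spectrumE.
rewrite Hrs root_prod_XsubC => /Heps; rewrite -subr_eq0 -normr_gt0 wz_gt0.
by move=> /(_ isT) /(lt_le_trans wz_lt); rewrite ltxx.
Qed.

End Isolation.

Section HermitianForms.
Variable R : realType.
Local Notation C := R[i].

Definition hform m (G : 'M[C]_m) (x : 'cV[C]_m) : C := (adjmx x *m G *m x) 0 0.

Definition posdef_on m k (G : 'M[C]_m) (B : 'M[C]_(m, k)) :=
  forall w, B *m w != 0 -> 0 < hform G (B *m w).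

Lemma hformN m (G : 'M[C]_m) x : hform (- G) x = - hform G x.
Proof. by rewrite /hform mulmxN mulNmx mxE. Qed.

Lemma hformD_orth m (G : 'M[C]_m) x y : adjmx G = G ->
  adjmx y *m G *m x = 0 -> hform G (x + y) = hform G x + hform G y.
Proof.
move=> HG Hyx; have Hxy : adjmx x *m G *m y = 0.
  by move: (congr1 (@adjmx R _ _) Hyx); rewrite !adjmxM adjmxK HG adjmx0 mulmxA.
by rewrite /hform adjmxD !mulmxDl !mulmxDr Hxy Hyx addr0 add0r mxE.
Qed.

Lemma posdef_on_ge0 m k (G : 'M[C]_m) (B : 'M[C]_(m, k)) w :
  posdef_on G B -> 0 <= hform G (B *m w).
Proof.
move=> HB; have [->|/HB/ltW//] := eqVneq (B *m w) 0.
by rewrite /hform adjmx0 !mul0mx mxE.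
Qed.

Lemma posdef_on_mulmx m p k (G : 'M[C]_m) (Q : 'M[C]_(m, p)) (B : 'M[C]_(p, k)) :
  posdef_on (adjmx Q *m G *m Q) B -> posdef_on G (Q *m B).
Proof.
move=> HB w QBw; have /HB : B *m w != 0.
  by apply: contraNneq QBw => Bw0; rewrite -mulmxA Bw0 mulmx0.
by rewrite /hform !adjmxM !mulmxA.
Qed.

Lemma mxrank_mul_isometry m p k (Q : 'M[C]_(m, p)) (B : 'M[C]_(p, k)) :
  adjmx Q *m Q = 1%:M -> \rank (Q *m B) = \rank B :> nat.
Proof.
move=> HQ; apply/eqP; rewrite eqn_leq mxrankM_maxr /=.
by rewrite -{1}[B]mul1mx -HQ -mulmxA mxrankM_maxr.
Qed.

Lemma sub_trmxP m k (B : 'M[C]_(m, k)) (u : 'rV[C]_m) :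
  (u <= B^T)%MS -> exists w, u^T = B *m w.
Proof. by move/submxP => [D ->]; exists D^T; rewrite trmx_mul trmxK. Qed.

(* On a vector [B1 w1 + B2 w2 = B3 w3] the form is both [>= 0] and [<= 0], so the
   three column spaces are independent. *)
Lemma rank_posdef_neutral_negdef m k1 k2 k3 (G : 'M[C]_m)
    (B1 : 'M[C]_(m, k1)) (B2 : 'M[C]_(m, k2)) (B3 : 'M[C]_(m, k3)) :
  adjmx G = G -> posdef_on G B1 -> (forall w, hform G (B2 *m w) = 0) ->
  (forall (w1 : 'cV_k1) (w2 : 'cV_k2), adjmx (B2 *m w2) *m G *m (B1 *m w1) = 0) ->
  posdef_on (- G) B3 -> (\rank B1 + \rank B2 + \rank B3 <= m)%N.
Proof.
move=> HG pos1 neutral2 orth12 neg3.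
have indep (w1 : 'cV_k1) (w2 : 'cV_k2) (w3 : 'cV_k3) : B1 *m w1 + B2 *m w2 = B3 *m w3 ->
    B1 *m w1 = 0 /\ B3 *m w3 = 0.
  move=> E; have F : hform G (B3 *m w3) = hform G (B1 *m w1).
    by rewrite -E (hformD_orth HG (orth12 _ _)) neutral2 addr0.
  have F0 : hform G (B1 *m w1) = 0.
    apply/eqP; rewrite eq_le posdef_on_ge0 // andbT -F.
    by rewrite -oppr_ge0 -hformN posdef_on_ge0.
  split; first by have [//|/pos1] := eqVneq (B1 *m w1) 0; rewrite F0 ltxx.
  by have [//|/neg3] := eqVneq (B3 *m w3) 0; rewrite hformN F F0 oppr0 ltxx.
have cap12 : (B1^T :&: B2^T)%MS = 0.
  apply/eqP/rowV0P => u; rewrite sub_capmx => /andP [/sub_trmxP [w1 E1]].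
  move=> /sub_trmxP [w2 E2]; apply: trmx_inj; rewrite trmx0 E1.
  by apply: (proj1 (indep w1 (- w2) 0 _)); rewrite mulmxN -E1 -E2 subrr mulmx0.
have cap123 : ((B1^T + B2^T) :&: B3^T)%MS = 0.
  apply/eqP/rowV0P => u; rewrite sub_capmx => /andP [/sub_addsmxP [[u1 u2] /= Eu]].
  move=> /sub_trmxP [w3 E3]; apply: trmx_inj; rewrite trmx0 E3.
  by apply: (proj2 (indep u1^T u2^T w3 _)); rewrite -E3 Eu linearD /= !trmx_mul !trmxK.
have := rank_leq_col (B1^T + B2^T + B3^T)%MS.
by rewrite (mxrank_disjoint_sum cap123) (mxrank_disjoint_sum cap12) !mxrank_tr.
Qed.

End HermitianForms.

Lemma char_poly_similar (F : fieldType) d (P A : 'M[F]_d) : P \in unitmx ->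
  char_poly (invmx P *m A *m P) = char_poly A.
Proof.
move=> Pu; rewrite /char_poly /char_poly_mx.
set mP := map_mx polyC P; set mQ := map_mx polyC (invmx P).
have mQP : mQ *m mP = 1%:M by rewrite -map_mxM mulVmx // map_mx1.
have -> : 'X%:M - map_mx polyC (invmx P *m A *m P) =
          mQ *m ('X%:M - map_mx polyC A) *m mP.
  by rewrite !map_mxM mulmxBr mulmxBl scalar_mxC -(mulmxA 'X%:M) mQP mulmx1.
by rewrite !det_mulmx mulrAC -det_mulmx mQP det1 mul1r.
Qed.

Section UnitaryDiagonalization.
Variable R : realType.
Local Notation C := R[i].

Lemma hermitian_unitary_diag d (M : 'M[C]_d) : adjmx M = M ->
  exists P (E : 'rV[C]_d), [/\ P *m adjmx P = 1%:M,
    M = adjmx P *m diag_mx E *m P & forall i, E 0 i \is Num.real].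
Proof.
move=> HM; have hermM : M \is hermsymmx.
  by apply/is_hermitianmxP; rewrite expr0 scale1r; exact: (esym HM).
have unitP := spectral_unitarymx M.
exists (spectralmx M), (spectral_diag M); split.
- exact: (unitarymxP unitP).
- rewrite -[adjmx _](invmx_unitary unitP); apply/orthomx_spectralP.
  exact: hermitian_normalmx.
- by move=> i; apply: (mxOverP (hermitian_spectral_diag_real hermM)).
Qed.

Lemma eig_list_unitary_diag d (P : 'M[C]_d) (E : 'rV[C]_d) rs :
  P *m adjmx P = 1%:M -> eig_list (adjmx P *m diag_mx E *m P) rs ->
  perm_eq rs [seq E 0 i | i <- enum 'I_d].
Proof.
move=> HP Hrs; have [unitP _] := mulmx1_unit HP.
have invP : invmx P = adjmx P.
  by rewrite -[invmx P]mul1mx -(mulmx1C HP) -mulmxA mulmxV // mulmx1.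
apply: prod_XsubC_eq; rewrite -Hrs /eig_list -invP char_poly_similar //.
rewrite char_poly_trig ?diag_mx_is_trig // big_map big_enum /=.
by apply: eq_bigr => i _; rewrite mxE eqxx mulr1n.
Qed.

Definition sel_mx d (A : {pred 'I_d}) : 'M[C]_(d, #|A|) :=
  colsub (@enum_val _ A) 1%:M.

Lemma sel_mxE d (A : {pred 'I_d}) i k : sel_mx A i k = (i == enum_val k)%:R.
Proof. by rewrite !mxE. Qed.

Lemma sel_mx_isometry d (A : {pred 'I_d}) : adjmx (sel_mx A) *m sel_mx A = 1%:M.
Proof.
apply/matrixP => k k'; rewrite !mxE (bigD1 (enum_val k)) //= big1 => [|i].
  by rewrite adjmxE !sel_mxE eqxx rmorph1 mul1r addr0 (inj_eq enum_val_inj) eq_sym.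
by rewrite adjmxE sel_mxE eq_sym => /negPf ->; rewrite rmorph0 mul0r.
Qed.

Lemma sel_mx_supp d (A : {pred 'I_d}) (w : 'cV[C]_#|A|) i :
  (sel_mx A *m w) i 0 != 0 -> i \in A.
Proof.
apply: contraR => iA; rewrite mxE big1 // => k _.
by rewrite sel_mxE; case: eqP => [ik|]; [rewrite ik enum_valP in iA | rewrite mul0r].
Qed.

Lemma hform_diag d (E : 'rV[C]_d) (c : 'cV[C]_d) :
  hform (diag_mx E) c = \sum_i E 0 i * `|c i 0| ^+ 2.
Proof.
rewrite /hform -mulmxA mul_diag_mx mxE; apply: eq_bigr => i _.
by rewrite adjmxE mxE mulrCA -normCKC.
Qed.

Lemma posdef_on_diag d (E : 'rV[C]_d) (A : {pred 'I_d}) :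
  {in A, forall i, 0 < E 0 i} -> posdef_on (diag_mx E) (sel_mx A).
Proof.
move=> EA w; set c := sel_mx A *m w => c_neq0.
have term_ge0 i : 0 <= E 0 i * `|c i 0| ^+ 2.
  have [->|/sel_mx_supp/EA/ltW] := eqVneq (c i 0) 0; first by rewrite normr0 expr0n mulr0.
  by move=> E_ge0; rewrite mulr_ge0 ?exprn_ge0.
rewrite hform_diag lt_def sumr_ge0 // andbT; apply: contra c_neq0.
move=> /eqP /(psumr_eq0P (fun i _ => term_ge0 i)) sum0.
apply/eqP/matrixP => i j; rewrite ord1 [RHS]mxE.
have [->|ci] := eqVneq (c i 0) 0; first by [].
move: (sum0 i isT) => /eqP.
by rewrite mulf_eq0 (gt_eqF (EA _ (sel_mx_supp ci))) sqrf_eq0 normr_eq0 (negbTE ci).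
Qed.

Lemma posdef_block_unitary_diag d (P : 'M[C]_d) (E : 'rV[C]_d) (A : {pred 'I_d}) :
  P *m adjmx P = 1%:M -> {in A, forall i, 0 < E 0 i} ->
  posdef_on (adjmx P *m diag_mx E *m P) (adjmx P *m sel_mx A) /\
  \rank (adjmx P *m sel_mx A) = #|A| :> nat.
Proof.
move=> HP EA; have adjP_isometry : adjmx (adjmx P) *m adjmx P = 1%:M by rewrite adjmxK.
split; last first.
  rewrite mxrank_mul_isometry // -[sel_mx A]mulmx1 mxrank_mul_isometry ?mxrank1 //.
  exact: sel_mx_isometry.
apply: posdef_on_mulmx; rewrite adjmxK !mulmxA HP mul1mx -mulmxA HP mulmx1.
exact: posdef_on_diag.
Qed.

End UnitaryDiagonalization.

Arguments sel_mx {R d} A.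

Section Annulus.
Variable R : realType.
Local Notation C := R[i].
Local Notation modulus := (@Normc.normc R).
Implicit Types (h : R) (a b z : C).

Definition annulus h z := expR (- h) <= modulus z <= expR h.
Definition outer h z := expR h < modulus z.
Definition inner h z := modulus z < expR (- h).

Lemma in_annulusE h z : in_annulus h z <-> annulus h z.
Proof.
by rewrite /in_annulus /annulus !norm_normc !lecR; split=> [[-> ->]|/andP []].
Qed.

Lemma E_eqE m (T : 'M[C]_m) h v : E_eq T h v <-> gen_eigspan T (annulus h) v.
Proof.
split=> [[s [Hs ->]]|[s Hs ->]].
  by exists s => // p /Hs [/in_annulusE Ap [Sp Ep]].
by exists s; split=> // p /Hs [/in_annulusE Ap Sp Ep].
Qed.

Lemma normc_ge0 z : 0 <= modulus z.
Proof. by case: z => a b; exact: sqrtr_ge0. Qed.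

Lemma conj_mul_neq1 a b : modulus a * modulus b != 1 -> b^* * a != 1.
Proof.
apply: contra => /eqP ba1; apply/eqP/(@complexI R).
by rewrite rmorphM rmorph1 /= -!norm_normc mulrC -(norm_conjC b) -normrM ba1 normr1.
Qed.

Lemma expRNh_expRh h : expR (- h) * expR h = 1.
Proof. by rewrite -expRD addNr expR0. Qed.

Lemma outer_outer_neq1 h : 0 < h -> forall a b, outer h a -> outer h b -> b^* * a != 1.
Proof.
rewrite -expR_gt1 => h1 a b; rewrite /outer => ha hb.
apply: conj_mul_neq1; apply/eqP => ab1.
have := normc_ge0 a; have := normc_ge0 b; nra.
Qed.

Lemma inner_inner_neq1 h : 0 < h -> forall a b, inner h a -> inner h b -> b^* * a != 1.
Proof.
rewrite -oppr_lt0 -expR_lt1 => h1 a b; rewrite /inner => ha hb.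
apply: conj_mul_neq1; apply/eqP => ab1.
have := normc_ge0 a; have := normc_ge0 b; nra.
Qed.

Lemma annulus_outer_neq1 h a b : annulus h a -> outer h b -> b^* * a != 1.
Proof.
rewrite /annulus /outer => /andP [ha _] hb; apply: conj_mul_neq1; apply/eqP => ab1.
have := expRNh_expRh h; have := expR_gt0 (- h); have := normc_ge0 b; nra.
Qed.

Lemma annulus_inner_neq1 h a b : annulus h a -> inner h b -> b^* * a != 1.
Proof.
rewrite /annulus /inner => /andP [_ ha] hb; apply: conj_mul_neq1; apply/eqP => ab1.
have := expRNh_expRh h; have := expR_gt0 h; have := normc_ge0 b; nra.
Qed.

End Annulus.

Section Decomposition.
Variable R : realType.
Local Notation C := R[i].

Lemma mulmx_sum_col m k (A : 'M[C]_(m, k)) (u : 'cV[C]_k) :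
  A *m u = \sum_j u j 0 *: col j A.
Proof.
apply/matrixP => i l; rewrite ord1 !mxE summxE; apply: eq_bigr => j _.
by rewrite !mxE mulrC.
Qed.

Lemma gen_eigspan_mx_split m k (T : 'M[C]_m) (P Q : pred C) (A : 'M[C]_(m, k)) :
  (forall u, gen_eigspan T P (A *m u)) ->
  exists F : 'M[C]_(m, k),
    (forall u, gen_eigspan T [predI P & Q] (F *m u)) /\
    (forall u, gen_eigspan T [predI P & predC Q] ((A - F) *m u)).
Proof.
move=> HA; have /fin_all_exists [s Hs] j :
    exists s, gen_eigpairs T P s /\ col j A = \sum_(p <- s) p.2.
  by have [s Hs EA] := HA (delta_mx j 0); exists s; rewrite colE.
pose F := \matrix_(i, j) (\sum_(p <- s j | Q p.1) p.2) i 0.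
have colF j : col j F = \sum_(p <- s j | Q p.1) p.2.
  by apply/matrixP => i l; rewrite ord1 !mxE.
exists F; split=> u; rewrite mulmx_sum_col; apply: gen_eigspan_sum => j.
  by apply: gen_eigspanZ; rewrite colF; apply: gen_eigspan_filter (proj1 (Hs j)).
rewrite linearB /= colF (proj2 (Hs j)) (bigID (fun p => Q p.1)) /= addrC addrK.
by apply: gen_eigspanZ; apply: (gen_eigspan_filter (predC Q) (proj1 (Hs j))).
Qed.

Lemma annulus_decomposition m (T : 'M[C]_m) h : exists Fa Fg Fl : 'M[C]_m,
  [/\ Fa + Fg + Fl = 1%:M, forall u, gen_eigspan T (annulus h) (Fa *m u),
      forall u, gen_eigspan T (outer h) (Fg *m u)
    & forall u, gen_eigspan T (inner h) (Fl *m u)].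
Proof.
have [Fa [Ha Hc]] :=
  gen_eigspan_mx_split (annulus h) (fun u => gen_eigspanT T (1%:M *m u)).
have [Fg [Hg Hl]] := gen_eigspan_mx_split (outer h) Hc.
exists Fa, Fg, (1%:M - Fa - Fg); split=> [|u|u|u].
- by rewrite -[1%:M - Fa - Fg]addrA -opprD (addrC (Fa + Fg)) subrK.
- by apply: gen_eigspanS (Ha u) => z /andP [].
- by apply: gen_eigspanS (Hg u) => z /andP [].
apply: gen_eigspanS (Hl u) => z /andP [/andP [_ not_annulus]].
move: not_annulus; rewrite !inE /annulus /outer -leNgt => not_ann z_le.
by rewrite -topredE /= /inner ltNge; apply: contra not_ann => ->.
Qed.

End Decomposition.

Section JForm.
Variable R : realType.
Local Notation C := R[i].

Lemma rank_posdef_spectral m (G T : 'M[C]_m) (P Q : pred C) k l r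
    (B : 'M[C]_(m, k)) (F : 'M[C]_(m, l)) (N : 'M[C]_(m, r)) :
  adjmx G = G -> adjmx T *m G *m T = G ->
  (forall a b, P a -> P b -> b^* * a != 1) ->
  (forall a b, Q a -> P b -> b^* * a != 1) ->
  (forall w, gen_eigspan T Q (B *m w)) -> (forall u, gen_eigspan T P (F *m u)) ->
  posdef_on G B -> posdef_on (- G) N -> (\rank B + \rank F + \rank N <= m)%N.
Proof.
move=> HG HT PP QP HB HF Bpos Nneg.
apply: (rank_posdef_neutral_negdef HG Bpos _ _ Nneg).
  by move=> u; rewrite /hform (gen_eigspan_orth HT PP (HF u) (HF u)) mxE.
by move=> w u; apply: gen_eigspan_orth HT QP (HB w) (HF u).
Qed.

Lemma hform_Jmx n (x y : 'cV[C]_n) :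
  hform (Jmx R n) (col_mx x y) = (adjmx x *m x) 0 0 - (adjmx y *m y) 0 0.
Proof.
rewrite /hform adjmx_col_mx /Jmx mul_row_block !mulmx0 addr0 add0r.
by rewrite mulmx1 mulmxN mulmx1 mul_row_col mulNmx [LHS]mxE [X in _ + X]mxE.
Qed.

Lemma posdef_on_Jmx n : posdef_on (Jmx R n) (col_mx 1%:M 0).
Proof.
move=> w; rewrite mul_col_mx mul1mx mul0mx hform_Jmx adjmx0 mul0mx [X in _ - X]mxE subr0.
move=> w_neq0; rewrite lt_def adjmx_mul_self_ge0 andbT.
by apply: contra w_neq0 => /eqP /adjmx_mul_self_eq0 ->; rewrite col_mx0.
Qed.

Lemma posdef_on_oppJmx n : posdef_on (- Jmx R n) (col_mx 0 1%:M).
Proof.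
move=> w; rewrite mul_col_mx mul1mx mul0mx hformN hform_Jmx adjmx0 mul0mx [X in X - _]mxE.
move=> w_neq0; rewrite sub0r opprK lt_def adjmx_mul_self_ge0 andbT.
by apply: contra w_neq0 => /eqP /adjmx_mul_self_eq0 ->; rewrite col_mx0.
Qed.

(* [J] is negative definite on the lower and positive definite on the upper
   [n]-dimensional half of [C^(n+n)]. *)
Lemma rank_Jdef_spectral n (T : 'M[C]_(n + n)) (P Q : pred C) k l
    (B : 'M[C]_(n + n, k)) (F : 'M[C]_(n + n, l)) :
  adjmx T *m Jmx R n *m T = Jmx R n ->
  (forall a b, P a -> P b -> b^* * a != 1) ->
  (forall a b, Q a -> P b -> b^* * a != 1) ->
  (forall w, gen_eigspan T Q (B *m w)) -> (forall u, gen_eigspan T P (F *m u)) ->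
  posdef_on (Jmx R n) B \/ posdef_on (- Jmx R n) B -> (\rank B + \rank F <= n)%N.
Proof.
move=> HT PP QP HB HF [Bpos|Bneg].
  have := rank_posdef_spectral (adjmx_Jmx R n) HT PP QP HB HF Bpos (@posdef_on_oppJmx n).
  by rewrite rank_col_0mx mxrank1 leq_add2r.
have HG : adjmx (- Jmx R n) = - Jmx R n by rewrite adjmxN adjmx_Jmx.
have HTN : adjmx T *m (- Jmx R n) *m T = - Jmx R n by rewrite mulmxN mulNmx HT.
have Jpos : posdef_on (- - Jmx R n) (col_mx 1%:M 0).
  by rewrite opprK; apply: posdef_on_Jmx.
have := rank_posdef_spectral HG HTN PP QP HB HF Bneg Jpos.
by rewrite rank_col_mx0 mxrank1 leq_add2r.
Qed.

Lemma rank_Jdef_annulus n (T : 'M[C]_(n + n)) h k l1 l2 (B : 'M[C]_(n + n, k))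
    (Fg : 'M[C]_(n + n, l1)) (Fl : 'M[C]_(n + n, l2)) :
  adjmx T *m Jmx R n *m T = Jmx R n -> 0 < h ->
  (forall w, gen_eigspan T (annulus h) (B *m w)) ->
  (forall u, gen_eigspan T (outer h) (Fg *m u)) ->
  (forall u, gen_eigspan T (inner h) (Fl *m u)) ->
  posdef_on (Jmx R n) B \/ posdef_on (- Jmx R n) B ->
  (\rank B + \rank Fg <= n)%N /\ (\rank B + \rank Fl <= n)%N.
Proof.
move=> HT hpos HB Hg Hl Bdef; split.
  exact: rank_Jdef_spectral HT (outer_outer_neq1 hpos) (@annulus_outer_neq1 _ h)
    HB Hg Bdef.
exact: rank_Jdef_spectral HT (inner_inner_neq1 hpos) (@annulus_inner_neq1 _ h)
  HB Hl Bdef.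
Qed.

(* [E_=] is [J]-orthogonal to [E_>] and [E_<], so [x] is orthogonal to [J x]. *)
Lemma annulus_Jmx_nondegenerate n (T : 'M[C]_(n + n)) h x :
  adjmx T *m Jmx R n *m T = Jmx R n -> gen_eigspan T (annulus h) x ->
  (forall y, gen_eigspan T (annulus h) y -> adjmx y *m Jmx R n *m x = 0) -> x = 0.
Proof.
move=> HT Ax orthx; have [Fa [Fg [Fl [Fsum Ha Hg Hl]]]] := annulus_decomposition T h.
set z := Jmx R n *m x.
have : adjmx z *m Jmx R n *m x = 0.
  rewrite -[z]mul1mx -Fsum !mulmxDl !adjmxD !mulmxDl orthx //.
  rewrite (gen_eigspan_orth HT (@annulus_outer_neq1 _ h) Ax (Hg z)).
  by rewrite (gen_eigspan_orth HT (@annulus_inner_neq1 _ h) Ax (Hl z)) !addr0.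
rewrite /z adjmxM -(mulmxA (adjmx x)) Jmx_unitary mulmx1 => xx0.
by apply: adjmx_mul_self_eq0; rewrite xx0 mxE.
Qed.

Lemma unitmx_cV d (M : 'M[C]_d) : (forall y : 'cV_d, M *m y = 0 -> y = 0) ->
  M \in unitmx.
Proof.
move=> HM; rewrite -unitmx_tr -row_free_unit; apply/inj_row_free => v vM.
apply: trmx_inj; rewrite trmx0; apply: HM.
by rewrite -[M]trmxK -trmx_mul vM trmx0.
Qed.

Lemma isometry_Jform_unit n (T : 'M[C]_(n + n)) h d (Phi : 'M[C]_(n + n, d)) :
  adjmx T *m Jmx R n *m T = Jmx R n -> adjmx Phi *m Phi = 1%:M ->
  (forall x, gen_eigspan T (annulus h) x <-> exists w, x = Phi *m w) ->
  adjmx Phi *m Jmx R n *m Phi \in unitmx.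
Proof.
move=> HT HPhi PhiE; apply: unitmx_cV => y My.
have Phiy0 : Phi *m y = 0.
  apply: (annulus_Jmx_nondegenerate HT); first by apply/PhiE; exists y.
  move=> _ /PhiE [w ->]; rewrite adjmxM -!mulmxA (mulmxA (adjmx Phi)).
  by rewrite (mulmxA (adjmx Phi *m _)) My mulmx0.
by rewrite -[y]mul1mx -HPhi -mulmxA Phiy0 mulmx0.
Qed.

Lemma mulmx_cV_inj m k (A B : 'M[C]_(m, k)) :
  (forall u : 'cV_k, A *m u = B *m u) -> A = B.
Proof.
move=> AB; apply/matrixP => i j.
by have := congr1 (fun v : 'cV_m => v i 0) (AB (delta_mx j 0)); rewrite -!colE !mxE.
Qed.

Lemma mxrank_isometry_range m d k (Phi : 'M[C]_(m, d)) (A : 'M[C]_(m, k)) :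
  adjmx Phi *m Phi = 1%:M -> (forall u : 'cV_k, exists w, A *m u = Phi *m w) ->
  (\rank A <= d)%N.
Proof.
move=> HPhi HA; have -> : A = Phi *m (adjmx Phi *m A).
  apply: mulmx_cV_inj => u; have [w Aw] := HA u.
  by rewrite -!mulmxA Aw (mulmxA (adjmx Phi)) HPhi mul1mx.
exact: leq_trans (mxrankM_maxl _ _) (rank_leq_col _).
Qed.

Lemma mxrank_sum3 m (A B D : 'M[C]_m) : A + B + D = 1%:M ->
  (m <= \rank A + \rank B + \rank D)%N.
Proof.
move=> ABD; rewrite -{1}(mxrank1 C m) -ABD.
exact: leq_trans (mxrank_add _ _) (leq_add (mxrank_add _ _) (leqnn _)).
Qed.

Lemma signature_unitary_diag d (P : 'M[C]_d) (E : 'rV[C]_d) rs :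
  P *m adjmx P = 1%:M -> (forall i, E 0 i \is Num.real) ->
  adjmx P *m diag_mx E *m P \in unitmx ->
  eig_list (adjmx P *m diag_mx E *m P) rs ->
  [/\ count (fun r : C => 0 < r) rs = #|[pred i | 0 < E 0 i]|,
      count (fun r : C => r < 0) rs = #|[pred i | E 0 i < 0]|
    & addn #|[pred i | 0 < E 0 i]| #|[pred i | E 0 i < 0]| = d].
Proof.
move=> HP Ereal Munit Hrs; have Hperm := eig_list_unitary_diag HP Hrs.
have E_neq0 i : E 0 i != 0.
  apply: contraTneq Munit => Ei0.
  have : in_spectrum (adjmx P *m diag_mx E *m P) 0.
    apply/in_spectrumE; rewrite Hrs root_prod_XsubC (perm_mem Hperm) -Ei0.
    by rewrite map_f ?mem_enum.
  by rewrite /in_spectrum raddf0 subr0 => /negP.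
split; try by rewrite (permP Hperm) count_map cardE size_filter enumT.
rewrite -cardUI (@eq_card0 _ [predI _ & _]) => [|i]; last first.
  by rewrite !inE; apply/negP => /andP [pos /lt_trans /(_ pos)]; rewrite ltxx.
rewrite addn0 -[RHS]card_ord; apply: eq_card => i; rewrite !inE orbC.
by rewrite -real_neqr_lt ?E_neq0.
Qed.

End JForm.

Lemma isometry_posdef_block (R : realType) m d (G : 'M[R[i]]_m) (Phi : 'M[R[i]]_(m, d))
    (P : 'M[R[i]]_d) (E : 'rV[R[i]]_d) (A : {pred 'I_d}) :
  adjmx Phi *m Phi = 1%:M -> P *m adjmx P = 1%:M ->
  adjmx Phi *m G *m Phi = adjmx P *m diag_mx E *m P -> {in A, forall i, 0 < E 0 i} ->
  exists2 B : 'M[R[i]]_(d, #|A|),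
    posdef_on G (Phi *m B) & \rank (Phi *m B) = #|A| :> nat.
Proof.
move=> HPhi HP HG EA; have [Bpos Brank] := posdef_block_unitary_diag HP EA.
exists (adjmx P *m sel_mx A); first by apply: posdef_on_mulmx; rewrite HG.
by rewrite mxrank_mul_isometry.
Qed.

Lemma isometry_negdef_block (R : realType) m d (G : 'M[R[i]]_m) (Phi : 'M[R[i]]_(m, d))
    (P : 'M[R[i]]_d) (E : 'rV[R[i]]_d) (A : {pred 'I_d}) :
  adjmx Phi *m Phi = 1%:M -> P *m adjmx P = 1%:M ->
  adjmx Phi *m G *m Phi = adjmx P *m diag_mx E *m P -> {in A, forall i, E 0 i < 0} ->
  exists2 B : 'M[R[i]]_(d, #|A|),
    posdef_on (- G) (Phi *m B) & \rank (Phi *m B) = #|A| :> nat.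
Proof.
move=> HPhi HP HG EA; apply: (isometry_posdef_block (E := - E) HPhi HP).
  by rewrite mulmxN mulNmx HG raddfN /= mulmxN mulNmx.
by move=> i /EA; rewrite mxE oppr_gt0.
Qed.

Theorem proposition5p6 (R : realType) (n : nat) (T : 'M[R[i]]_(n + n)) :
  J_unitary T ->
  ess_S1_gapped T /\
  (forall (h : R) (d : nat) (Phi : 'M[R[i]]_(n + n, d)) (rs : seq R[i]),
     admissible_h T h ->
     isometry_onto_E T h Phi ->
     eig_list (adjmx Phi *m Jmx R n *m Phi) rs ->
     signature_of rs = 0%:Z).
Proof.
move=> [_ HT]; split=> [|h d Phi rs [hpos _] [HPhi HE] Hrs].
  exact: matrix_ess_S1_gapped.
have PhiE x : gen_eigspan T (annulus h) x <-> exists w, x = Phi *m w.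
  by split=> [/E_eqE/HE|/HE/E_eqE].
have PhiB k (B : 'M_(d, k)) w : gen_eigspan T (annulus h) (Phi *m B *m w).
  by apply/PhiE; exists (B *m w); rewrite mulmxA.
have [Fa [Fg [Fl [Fsum Ha Hg Hl]]]] := annulus_decomposition T h.
have Munit := isometry_Jform_unit HT HPhi PhiE.
have hermM : adjmx (adjmx Phi *m Jmx R n *m Phi) = adjmx Phi *m Jmx R n *m Phi.
  by rewrite !adjmxM adjmxK adjmx_Jmx !mulmxA.
have [P [E [HP ME Ereal]]] := hermitian_unitary_diag hermM.
rewrite ME in Munit Hrs.
have [cnt_pos cnt_neg card_d] := signature_unitary_diag HP Ereal Munit Hrs.
have [Bp Bp_pos Bp_rank] :=
  isometry_posdef_block (A := [pred i | 0 < E 0 i]) HPhi HP ME (fun i => id).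
have [Bn Bn_neg Bn_rank] :=
  isometry_negdef_block (A := [pred i | E 0 i < 0]) HPhi HP ME (fun i => id).
have [] := rank_Jdef_annulus HT hpos (PhiB _ Bp) Hg Hl (or_introl Bp_pos).
have [] := rank_Jdef_annulus HT hpos (PhiB _ Bn) Hg Hl (or_intror Bn_neg).
have := mxrank_isometry_range HPhi (fun u => (PhiE _).1 (Ha u)).
have := mxrank_sum3 Fsum.
rewrite /signature_of cnt_pos cnt_neg Bp_rank Bn_rank; move: card_d.
set p := #|[pred i | 0 < E 0 i]|; set q := #|[pred i | E 0 i < 0]|; lia.
Qed.
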